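(* Let $E=\mathbb{Q}(i,\sqrt5)$, let $\tau=(1+\sqrt5)/2$, and let $\sigma$ be the automorphism of $E$ with $\sigma(i)=i$ and $\sigma(\sqrt5)=-\sqrt5$. For a real number $N\ge 1$ let $\mathbf{L}(N)$ be the set of numbers $x=(a+bi)+(c+di)\tau\in E$ with $a,b,c,d\in\mathbb{Z}$ and $|a|,|b|,|c|,|d|\le N$. For $x_1,x_2\in E$ put $$X(x_1,x_2)=\begin{pmatrix} x_1 & \sigma(x_1)\\ i\,x_2 & \sigma(x_2)\end{pmatrix},$$ and define the decay function $$D(N_1,N_2)=\min_{x_1\in\mathbf{L}(N_1)\setminus\{0\},\ x_2\in\mathbf{L}(N_2)\setminus\{0\}}\left|\det X(x_1,x_2)\right|.$$ Then there exists a constant $K>0$ such that for all sufficiently large $N_1,N_2$, $$D(N_1,N_2)\ge\frac{K}{N_1N_2}.$$ In particular, $D(N,N)\ge K/N^2$ for all sufficiently large $N$.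
   Context: This is the two-user single-antenna Badr–Belfiore multiuser MIMO code: user 1 transmits the row $(x_1,\sigma(x_1))$ and user 2 the row $(i x_2,\sigma(x_2))$; the determinant $\det X(x_1,x_2)$ is nonzero whenever $x_1\neq 0$ and $x_2\neq0$, so $D$ takes positive values. *)

(* E = Q(i, sqrt 5) is realised inside the complex numbers
   R[i] over an arbitrary real closed field R (e.g. the reals). *)
From HB Require Import structures.
From mathcomp Require Import all_boot all_order all_algebra.
From mathcomp Require Import complex.
Set Implicit Arguments. Unset Strict Implicit. Unset Printing Implicit Defensive.
Import Order.TTheory GRing.Theory Num.Theory.
Local Open Scope ring_scope.
Local Open Scope complex_scope.

Section BB.
Variable R : rcfType.

Definition sqrt5 : R := Num.sqrt 5.
Definition tau : R[i] := ((1 + sqrt5) / 2)%:C.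
Definition tau_conj : R[i] := ((1 - sqrt5) / 2)%:C.

Definition eltE (a b c d : int) : R[i] :=
  (a%:~R +i* b%:~R) + (c%:~R +i* d%:~R) * tau.

(* sigma(x) where sigma fixes i and sends sqrt 5 to - sqrt 5,
   i.e. sigma(tau) = (1 - sqrt 5)/2 *)
Definition sigma_eltE (a b c d : int) : R[i] :=
  (a%:~R +i* b%:~R) + (c%:~R +i* d%:~R) * tau_conj.

Definition in_box (N : R) (a b c d : int) : Prop :=
  (`|a|%:~R <= N) /\ (`|b|%:~R <= N) /\ (`|c|%:~R <= N) /\ (`|d|%:~R <= N).

Definition detX (x1 sx1 x2 sx2 : R[i]) : R[i] := x1 * sx2 - ('i * x2) * sx1.

Definition cmod (z : R[i]) : R := Normc.normc z.
End BB.

From HB Require Import structures.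
From mathcomp Require Import all_boot all_order all_algebra.
From mathcomp Require Import complex.
From mathcomp Require Import zify ring lra.
Set Implicit Arguments.
Unset Strict Implicit.
Unset Printing Implicit Defensive.

Import Order.TTheory GRing.Theory Num.Theory.
Local Open Scope ring_scope.
Local Open Scope complex_scope.

(* Write x = P + Q tau with Gaussian integers P, Q, so that sigma(x) = P + Q tau'.
   Then det X = A + B tau and its conjugate sigma(det X) = A + B tau' for Gaussian
   integers A, B, and det X * sigma(det X) = A^2 + AB - B^2 is a Gaussian integer.
   By irrationality of sqrt 5 it is nonzero as soon as det X is, so its modulus is
   at least 1.  Since |sigma(det X)| = O(N1 N2), this gives |det X| >> 1/(N1 N2). *)

Lemma sqr_eq5_sqr (u v : nat) : (u * u = 5 * (v * v))%N -> v = 0%N.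
Proof.
move=> uv; have [//|v_gt0] := posnP v.
have u_gt0 : (0 < u)%N by case: (posnP u) uv => [->|//]; lia.
(* the 5-adic valuation is even on the left and odd on the right *)
have := congr1 (logn 5) uv.
rewrite !lognM ?muln_gt0 ?u_gt0 ?v_gt0 // (logn_prime _ (isT : prime 5)) eqxx.
lia.
Qed.

Lemma golden_form_eq0 (m n : int) : m * m + m * n - n * n = 0 -> n = 0.
Proof.
move=> mn; have sq : (2 * m + n) * (2 * m + n) = 5 * (n * n).
  by rewrite -[LHS]subr0 -(mulr0 4) -mn; ring.
have : (`|(2 * m + n)%R| * `|(2 * m + n)%R| = 5 * (`|n| * `|n|))%N by nia.
by move/sqr_eq5_sqr/eqP; rewrite absz_eq0 => /eqP.
Qed.

Section GoldenPair.
Variables (S : comNzRingType) (t t' : S).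
Hypotheses (golden_add : t + t' = 1) (golden_mul : t * t' = -1).

Lemma golden_norm (a b : S) : (a + b * t) * (a + b * t') = a * a + a * b - b * b.
Proof.
transitivity (a * a + a * b * (t + t') + b * b * (t * t')); first by ring.
by rewrite golden_add golden_mul; ring.
Qed.

Lemma golden_det (j P1 Q1 P2 Q2 : S) :
  (P1 + Q1 * t) * (P2 + Q2 * t') - j * (P2 + Q2 * t) * (P1 + Q1 * t') =
  ((1 - j) * (P1 * P2 - Q1 * Q2) + P1 * Q2 - j * P2 * Q1)
  + (1 + j) * (Q1 * P2 - P1 * Q2) * t.
Proof.
have -> : t' = 1 - t by rewrite -golden_add addrC addKr.
have golden_mul' : t * (1 - t) = -1 by rewrite -golden_mul -golden_add addrC addKr.
transitivity (((1 - j) * (P1 * P2 - Q1 * Q2) + P1 * Q2 - j * P2 * Q1)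
  + (1 + j) * (Q1 * P2 - P1 * Q2) * t + (1 - j) * Q1 * Q2 * (t * (1 - t) + 1)).
  by ring.
by rewrite golden_mul' addNr mulr0 addr0.
Qed.

End GoldenPair.

Lemma golden_int_eq0 (R : numDomainType) (t t' : R) :
  t + t' = 1 -> t * t' = -1 ->
  forall m n : int, m%:~R + n%:~R * t = 0 -> m = 0 /\ n = 0.
Proof.
move=> tt'1 tt'M m n mn0.
have := golden_norm tt'1 tt'M m%:~R n%:~R.
rewrite mn0 mul0r -!intrM -intrD -intrB => /esym/eqP; rewrite intr_eq0.
move=> /eqP/golden_form_eq0 n0; split=> //.
by move: mn0; rewrite n0 mul0r addr0 => /eqP; rewrite intr_eq0 => /eqP.
Qed.

Section GaussianInt.
Variable R : rcfType.

Definition gaussian_int (z : R[i]) : Prop := exists m n : int, z = m%:~R +i* n%:~R.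

Lemma gaussian_int_cplx (m n : int) : gaussian_int (m%:~R +i* n%:~R).
Proof. by exists m, n. Qed.

Lemma gaussian_int1 : gaussian_int 1.
Proof. by exists 1, 0. Qed.

Lemma gaussian_int_i : gaussian_int 'i.
Proof. by exists 0, 1. Qed.

Lemma gaussian_intN x : gaussian_int x -> gaussian_int (- x).
Proof.
move=> [m [n ->]]; exists (- m), (- n).
by apply/eqP; rewrite eq_complex /= !intrN !eqxx.
Qed.

Lemma gaussian_intD x y : gaussian_int x -> gaussian_int y -> gaussian_int (x + y).
Proof.
move=> [m1 [n1 ->]] [m2 [n2 ->]]; exists (m1 + m2), (n1 + n2).
by apply/eqP; rewrite eq_complex /= !intrD !eqxx.
Qed.

Lemma gaussian_intM x y : gaussian_int x -> gaussian_int y -> gaussian_int (x * y).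
Proof.
move=> [m1 [n1 ->]] [m2 [n2 ->]]; exists (m1 * m2 - n1 * n2), (m1 * n2 + n1 * m2).
apply/eqP; rewrite eq_complex /= !(intrD, intrB, intrM).
by apply/andP; split; apply/eqP; ring.
Qed.

Lemma gaussian_int_normc_ge1 z : gaussian_int z -> z != 0 -> 1 <= Normc.normc z.
Proof.
move=> [m [n ->]] z_neq0.
rewrite /= -{1}sqrtr1 ler_sqrt ?addr_ge0 ?sqr_ge0 //.
rewrite !expr2 -!intrM -intrD ler1z.
have : (m != 0) || (n != 0).
  by apply: contraR z_neq0; rewrite negb_or !negbK => /andP[/eqP-> /eqP->].
by case/orP => /eqP; nia.
Qed.

Lemma gaussian_golden_eq0 (t t' : R) : t + t' = 1 -> t * t' = -1 ->
  forall P Q, gaussian_int P -> gaussian_int Q -> P + Q * t%:C = 0 -> P = 0 /\ Q = 0.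
Proof.
move=> tt'1 tt'M P Q [a [b ->]] [c [d ->]] /eqP.
rewrite eq_complex /= => /andP[/eqP re0 /eqP im0].
rewrite mulr0 subr0 in re0; rewrite mulr0 add0r in im0.
have [-> ->] := golden_int_eq0 tt'1 tt'M re0.
by have [-> ->] := golden_int_eq0 tt'1 tt'M im0.
Qed.

End GaussianInt.

Ltac gaussian_int_closure := repeat match goal with
  | |- gaussian_int (_ + _) => apply: gaussian_intD
  | |- gaussian_int (- _) => apply: gaussian_intN
  | |- gaussian_int (_ * _) => apply: gaussian_intM
  | |- gaussian_int 1 => exact: gaussian_int1
  | _ => assumption
  end.

Section GoldenRatio.
Variable R : rcfType.
Local Notation phi := ((1 + sqrt5 R) / 2).
Local Notation phi' := ((1 - sqrt5 R) / 2).

Lemma sqrt5_sqr : sqrt5 R ^+ 2 = 5.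
Proof. by rewrite sqr_sqrtr // ler0n. Qed.

Lemma golden_ratio_add : phi + phi' = 1.
Proof. by field. Qed.

Lemma golden_ratio_mul : phi * phi' = -1.
Proof.
have -> : phi * phi' = (1 - sqrt5 R ^+ 2) / 4 by field.
by rewrite sqrt5_sqr; field.
Qed.

Lemma golden_ratio_norm_le2 : `|phi| <= 2 /\ `|phi'| <= 2.
Proof.
have sqrt5_ge0 : 0 <= sqrt5 R := sqrtr_ge0 _.
have sqrt5_le3 : sqrt5 R <= 3 by have := sqrt5_sqr; nra.
by rewrite !ler_norml; split; apply/andP; split; lra.
Qed.

Lemma tau_add_conj : tau R + tau_conj R = 1.
Proof. by rewrite -rmorphD golden_ratio_add. Qed.

Lemma tau_mul_conj : tau R * tau_conj R = -1.
Proof. by rewrite -rmorphM golden_ratio_mul rmorphN rmorph1. Qed.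

Lemma gaussian_tau_eq0 (P Q : R[i]) : gaussian_int P -> gaussian_int Q ->
  P + Q * tau R = 0 -> P = 0 /\ Q = 0.
Proof. exact: (gaussian_golden_eq0 golden_ratio_add golden_ratio_mul). Qed.

Lemma gaussian_tau_conj_eq0 (P Q : R[i]) : gaussian_int P -> gaussian_int Q ->
  P + Q * tau_conj R = 0 -> P = 0 /\ Q = 0.
Proof.
have add_conj := golden_ratio_add; have mul_conj := golden_ratio_mul.
rewrite addrC in add_conj; rewrite mulrC in mul_conj.
exact: (gaussian_golden_eq0 add_conj mul_conj).
Qed.

End GoldenRatio.

Section Determinant.
Variables (R : rcfType) (P1 Q1 P2 Q2 : R[i]).
Hypotheses (P1_int : gaussian_int P1) (Q1_int : gaussian_int Q1).
Hypotheses (P2_int : gaussian_int P2) (Q2_int : gaussian_int Q2).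
Local Notation x1 := (P1 + Q1 * tau R).
Local Notation s1 := (P1 + Q1 * tau_conj R).
Local Notation x2 := (P2 + Q2 * tau R).
Local Notation s2 := (P2 + Q2 * tau_conj R).

(* [detX s1 x1 s2 x2] is sigma applied to [detX x1 s1 x2 s2]. *)
Lemma detX_golden : exists A B, [/\ gaussian_int A, gaussian_int B,
  detX x1 s1 x2 s2 = A + B * tau R & detX s1 x1 s2 x2 = A + B * tau_conj R].
Proof.
pose j : R[i] := 'i.
exists ((1 - j) * (P1 * P2 - Q1 * Q2) + P1 * Q2 - j * P2 * Q1).
exists ((1 + j) * (Q1 * P2 - P1 * Q2)).
have j_int : gaussian_int j := gaussian_int_i R.
split; try gaussian_int_closure.
- exact: golden_det (tau_add_conj R) (tau_mul_conj R) _ _ _ _ _.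
- apply: golden_det; first by rewrite addrC tau_add_conj.
  by rewrite mulrC tau_mul_conj.
Qed.

Lemma detX_neq0 : x1 != 0 -> x2 != 0 -> detX x1 s1 x2 s2 != 0.
Proof.
move=> x1_neq0 x2_neq0; apply/eqP => det0.
have [A [B [A_int B_int detE detsE]]] := detX_golden.
have [A0 B0] : A = 0 /\ B = 0 by apply: gaussian_tau_eq0; rewrite // -detE.
have dets0 : detX s1 x1 s2 x2 = 0 by rewrite detsE A0 B0 mul0r addr0.
have double_x1s2 : x1 * s2 * (1 - 'i ^+ 2) = detX x1 s1 x2 s2 + 'i * detX s1 x1 s2 x2.
  by rewrite /detX; ring.
move: double_x1s2; rewrite det0 dets0 mulr0 addr0 sqr_i opprK => /eqP.
rewrite !mulf_eq0 => /orP[/orP[x1_0|/eqP s2_0]|two_0].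
- by rewrite x1_0 in x1_neq0.
- have [P2_0 Q2_0] := gaussian_tau_conj_eq0 P2_int Q2_int s2_0.
  by rewrite P2_0 Q2_0 mul0r addr0 eqxx in x2_neq0.
- by rewrite -[1 + 1]/(2%:R : R[i]) pnatr_eq0 in two_0.
Qed.

Lemma normc_detX_conj_ge1 : x1 != 0 -> x2 != 0 ->
  1 <= Normc.normc (detX x1 s1 x2 s2) * Normc.normc (detX s1 x1 s2 x2).
Proof.
move=> x1_neq0 x2_neq0; have := detX_neq0 x1_neq0 x2_neq0.
have [A [B [A_int B_int -> ->]]] := detX_golden.
move=> det_neq0; rewrite -Normc.normcM.
have dets_neq0 : A + B * tau_conj R != 0.
  apply: contra det_neq0 => /eqP/(gaussian_tau_conj_eq0 A_int B_int)[-> ->].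
  by rewrite mul0r addr0.
apply: gaussian_int_normc_ge1; last exact: mulf_neq0.
rewrite (golden_norm (tau_add_conj R) (tau_mul_conj R)).
gaussian_int_closure.
Qed.

End Determinant.

Section NormBounds.
Variable R : rcfType.

Lemma normc_ge0 (z : R[i]) : 0 <= Normc.normc z.
Proof. by case: z => x y; exact: sqrtr_ge0. Qed.

Lemma normc_real (t : R) : Normc.normc t%:C = `|t|.
Proof. by rewrite /= expr0n addr0 sqrtr_sqr. Qed.

Lemma normc_i : Normc.normc ('i : R[i]) = 1.
Proof. by rewrite /= expr0n add0r expr1n sqrtr1. Qed.

Lemma normc_cplx_le (x y : R) : Normc.normc (x +i* y) <= `|x| + `|y|.
Proof.
have -> : `|x| + `|y| = Num.sqrt ((`|x| + `|y|) ^+ 2).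
  by rewrite sqrtr_sqr (ger0_norm (addr_ge0 (normr_ge0 x) (normr_ge0 y))).
rewrite /= ler_sqrt ?sqr_ge0 // sqrrD !real_normK ?num_real //.
by rewrite lerD2r lerDl mulrn_wge0 ?mulr_ge0.
Qed.

Lemma normc_detX_le (x1 s1 x2 s2 : R[i]) : Normc.normc (detX x1 s1 x2 s2) <=
  Normc.normc x1 * Normc.normc s2 + Normc.normc x2 * Normc.normc s1.
Proof.
apply: le_trans (le_normcD _ _) _.
by rewrite normcN !Normc.normcM normc_i mul1r.
Qed.

Lemma normc_box_le (N t : R) (a b c d : int) : `|t| <= 2 -> in_box N a b c d ->
  Normc.normc ((a%:~R +i* b%:~R) + (c%:~R +i* d%:~R) * t%:C) <= 6 * N.
Proof.
rewrite /in_box !intr_norm => t_le2 [a_le [b_le [c_le d_le]]].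
apply: le_trans (le_normcD _ _) _; rewrite Normc.normcM normc_real.
have ab_le := normc_cplx_le a%:~R b%:~R; have cd_le := normc_cplx_le c%:~R d%:~R.
have := normc_ge0 (c%:~R +i* d%:~R); have := normr_ge0 t.
nra.
Qed.

End NormBounds.

Theorem theorem2p3 (R : rcfType) :
  exists K : R, 0 < K /\
  exists N0 : R, forall N1 N2 : R, 1 <= N1 -> 1 <= N2 -> N0 <= N1 -> N0 <= N2 ->
  forall a1 b1 c1 d1 a2 b2 c2 d2 : int,
    in_box N1 a1 b1 c1 d1 -> in_box N2 a2 b2 c2 d2 ->
    eltE R a1 b1 c1 d1 != 0 -> eltE R a2 b2 c2 d2 != 0 ->
    K / (N1 * N2) <=
      cmod (detX (eltE R a1 b1 c1 d1) (sigma_eltE R a1 b1 c1 d1)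
                 (eltE R a2 b2 c2 d2) (sigma_eltE R a2 b2 c2 d2)).
Proof.
exists (1 / 72); split; first lra.
exists 1 => N1 N2 N1_ge1 N2_ge1 _ _ a1 b1 c1 d1 a2 b2 c2 d2 box1 box2 x1_neq0 x2_neq0.
have det_conj_ge1 := normc_detX_conj_ge1 (gaussian_int_cplx R a1 b1)
  (gaussian_int_cplx R c1 d1) (gaussian_int_cplx R a2 b2) (gaussian_int_cplx R c2 d2)
  x1_neq0 x2_neq0.
rewrite /cmod; move: det_conj_ge1.
set x1 := eltE R a1 b1 c1 d1; set s1 := sigma_eltE R a1 b1 c1 d1.
set x2 := eltE R a2 b2 c2 d2; set s2 := sigma_eltE R a2 b2 c2 d2.
have [phi_le2 phi'_le2] := golden_ratio_norm_le2 R.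
have x1_le : Normc.normc x1 <= 6 * N1 := normc_box_le phi_le2 box1.
have s1_le : Normc.normc s1 <= 6 * N1 := normc_box_le phi'_le2 box1.
have x2_le : Normc.normc x2 <= 6 * N2 := normc_box_le phi_le2 box2.
have s2_le : Normc.normc s2 <= 6 * N2 := normc_box_le phi'_le2 box2.
have det_conj_le : Normc.normc (detX s1 x1 s2 x2) <= 72 * (N1 * N2).
  apply: le_trans (normc_detX_le _ _ _ _) _.
  have := normc_ge0 x1; have := normc_ge0 s1; have := normc_ge0 x2; have := normc_ge0 s2.
  nra.
have := normc_ge0 (detX x1 s1 x2 s2).
rewrite ler_pdivrMr; last by apply: mulr_gt0; lra.
nra.
Qed.
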